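(* Let $\mathcal{H}$ be a real Hilbert space, let $\ell\geq 0$, and let $g\in \Gamma_0(\mathcal{H})$ be such that its Legendre–Fenchel conjugate $g^{\ast}$ is bounded from below and $$\Vert x\Vert-\ell \leq \Vert \operatorname{prox}_g(x)\Vert \quad \text{for all } x\in \mathcal{H}.$$ Then $g(x)-g(0)\leq \ell \Vert x\Vert$ for all $x\in\mathcal{H}$. Moreover, if $\ell=0$, then $g$ is constant.
   Context: $\Gamma_0(\mathcal{H})$ denotes the set of proper, convex, lower semicontinuous functions $\mathcal{H}\to\mathbb{R}\cup\{+\infty\}$. The conjugate is $g^{\ast}(x^* )=\sup_{v\in\mathcal{H}}\{\langle x^*,v\rangle-g(v)\}$. For $g\in\Gamma_0(\mathcal{H})$, $\operatorname{prox}_g(x)=\operatorname{argmin}_{y\in\mathcal{H}}\{g(y)+\tfrac12\Vert x-y\Vert^2\}$. *)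

From HB Require Import structures.
From mathcomp Require Import all_boot all_order all_algebra.
From mathcomp Require Import all_classical all_reals all_analysis.
Set Implicit Arguments. Unset Strict Implicit. Unset Printing Implicit Defensive.
Import Order.TTheory GRing.Theory Num.Theory.
Import numFieldNormedType.Exports.
Local Open Scope classical_set_scope.
Local Open Scope ring_scope.

(* A real Hilbert space is a complete normed space H over the reals R whose
   norm is induced by a (real, symmetric, bilinear) inner product. *)
Definition is_inner_product (R : realType) (H : completeNormedModType R)
  (ip : H -> H -> R) : Prop :=
  [/\ (forall x y, ip x y = ip y x),
      (forall a x y z, ip (a *: x + y) z = a * ip x z + ip y z)
    & (forall x, `|x| ^+ 2 = ip x x)].

(* g : H -> R \cup {+oo}, encoded in the extended reals. *)
Definition proper_fun (R : realType) (H : completeNormedModType R)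
  (g : H -> \bar R) : Prop :=
  (forall x, g x != -oo%E) /\ (exists x, g x \is a fin_num).

Definition convex_fun (R : realType) (H : completeNormedModType R)
  (g : H -> \bar R) : Prop :=
  forall (x y : H) (t : R), 0 <= t <= 1 ->
    (g (t *: x + (1 - t) *: y)%R <= t%:E * g x + (1 - t)%:E * g y)%E.

Definition lsc_fun (R : realType) (H : completeNormedModType R)
  (g : H -> \bar R) : Prop :=
  forall a : R, closed [set x | (g x <= a%:E)%E].

Definition Gamma0 (R : realType) (H : completeNormedModType R)
  (g : H -> \bar R) : Prop :=
  [/\ proper_fun g, convex_fun g & lsc_fun g].

(* Legendre-Fenchel conjugate (dual identified with H via the inner product) *)
Definition conjugate (R : realType) (H : completeNormedModType R)
  (ip : H -> H -> R) (g : H -> \bar R) (xs : H) : \bar R :=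
  ereal_sup [set ((ip xs v)%:E - g v)%E | v in [set: H]].

Definition is_prox (R : realType) (H : completeNormedModType R)
  (g : H -> \bar R) (x p : H) : Prop :=
  forall y : H,
    (g p + (2^-1 * `|x - p| ^+ 2)%:E <= g y + (2^-1 * `|x - y| ^+ 2)%:E)%E.

From HB Require Import structures.
From mathcomp Require Import all_boot all_order all_algebra.
From mathcomp Require Import all_classical all_reals all_analysis.
From mathcomp Require Import ring lra.
Set Implicit Arguments. Unset Strict Implicit. Unset Printing Implicit Defensive.
Import Order.TTheory GRing.Theory Num.Theory.
Import numFieldNormedType.Exports.
Local Open Scope classical_set_scope.
Local Open Scope ring_scope.

(* The key fact is that every subgradient u of g (at a point p where g is
   finite) has norm at most l.  Otherwise take the proximal point q of g at
   (1 + s) u: the hypothesis gives |q| >= (1 + s) |u| - l, while (1 + s) u - q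
   is a subgradient at q, so the Fenchel-Young equality and the lower bound m
   on g^* give |q|^2 - s <u, q> <= <u, p> - g p - m.  By Cauchy-Schwarz the
   left-hand side is at least s |u| (|u| - l), which is unbounded in s.
   Now let p_n minimise g + (n + 1)/2 |y - .|^2.  Then (n + 1)(y - p_n) is a
   subgradient at p_n, so |y - p_n| <= l / (n + 1) and
   g p_n <= g x + l |p_n - x|; lower semicontinuity lets n go to infinity and
   yields g y <= g x + l |y - x|.  The minimisers exist because a minimising
   sequence is Cauchy by the parallelogram law. *)

Section InnerProduct.
Variables (R : realType) (H : completeNormedModType R) (ip : H -> H -> R).
Hypothesis ipP : is_inner_product ip.

Lemma ipC x y : ip x y = ip y x.
Proof. by case: ipP. Qed.

Lemma ipZDl a x y z : ip (a *: x + y) z = a * ip x z + ip y z.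
Proof. by case: ipP. Qed.

Lemma sqr_norm_ip x : `|x| ^+ 2 = ip x x.
Proof. by case: ipP. Qed.

Lemma ip0l z : ip 0 z = 0.
Proof.
have := ipZDl 1 0 0 z; rewrite scaler0 addr0 mul1r => h.
by apply: (addrI (ip 0 z)); rewrite addr0 -h.
Qed.

Lemma ipZl a x z : ip (a *: x) z = a * ip x z.
Proof. by rewrite -[a *: x]addr0 ipZDl ip0l addr0. Qed.

Lemma ipDl x y z : ip (x + y) z = ip x z + ip y z.
Proof. by have := ipZDl 1 x y z; rewrite scale1r mul1r. Qed.

Lemma ipZr a x z : ip z (a *: x) = a * ip z x.
Proof. by rewrite ipC ipZl ipC. Qed.

Lemma ipDr x y z : ip z (x + y) = ip z x + ip z y.
Proof. by rewrite ipC ipDl !(ipC z). Qed.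

Lemma ipNl x z : ip (- x) z = - ip x z.
Proof. by rewrite -scaleN1r ipZl mulN1r. Qed.

Lemma ipBr x y z : ip z (x - y) = ip z x - ip z y.
Proof. by rewrite ipC ipDl ipNl !(ipC z). Qed.

Lemma sqr_normDZ a b x y : `|a *: x + b *: y| ^+ 2 =
  a ^+ 2 * `|x| ^+ 2 + 2 * a * b * ip x y + b ^+ 2 * `|y| ^+ 2.
Proof. by rewrite !sqr_norm_ip ipDl !ipDr !ipZl !ipZr (ipC y x); ring. Qed.

Lemma apollonius (x y z : H) :
  `|z - (2^-1 *: x + 2^-1 *: y)| ^+ 2 =
  2^-1 * `|z - x| ^+ 2 + 2^-1 * `|z - y| ^+ 2 - 4^-1 * `|x - y| ^+ 2.
Proof.
have -> : z - (2^-1 *: x + 2^-1 *: y) = 2^-1 *: (z - x) + 2^-1 *: (z - y).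
  have half : 2^-1 + 2^-1 = 1 :> R by field.
  by rewrite !scalerBr addrACA -opprD -scalerDl half scale1r.
have -> : x - y = 1 *: (z - y) + (-1) *: (z - x).
  by rewrite scale1r scaleN1r opprB [RHS]addrC addrA subrK.
by rewrite !sqr_normDZ (ipC (z - y)); field.
Qed.

Lemma ip_le_normM x y : ip x y <= `|x| * `|y|.
Proof.
have [->|x0] := eqVneq x 0; first by rewrite ip0l normr0 mul0r.
have [->|y0] := eqVneq y 0; first by rewrite ipC ip0l normr0 mulr0.
have xy_gt0 : 0 < `|x| * `|y| by rewrite mulr_gt0 ?normr_gt0.
(* [0 <= | |y| x - |x| y |^2 = 2 |x| |y| (|x| |y| - ip x y)] *)
have := sqr_ge0 (`| `|y| *: x + (- `|x|) *: y |).
rewrite sqr_normDZ => h.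
have : 0 <= (`|x| * `|y|) * (`|x| * `|y| - ip x y) by nra.
by rewrite pmulr_rge0 // subr_ge0.
Qed.

End InnerProduct.

Section LowerSemicontinuity.
Variables (R : realType) (H : completeNormedModType R) (g : H -> \bar R).
Hypothesis g_lsc : lsc_fun g.

Lemma lsc_cvg_le (T : Type) (F : set_system T) {FF : ProperFilter F}
    (f : T -> H) (b : T -> R) (p : H) (a : R) :
  f @ F --> p -> b @ F --> a ->
  (\forall t \near F, (g (f t) <= (b t)%:E)%E) -> (g p <= a%:E)%E.
Proof.
move=> fp ba gfb; apply/lee_addgt0Pr => e e0.
rewrite -EFinD; apply: (closed_cvg _ (@g_lsc (a + e))) _ _ fp.
near=> t.
have bt : `|a - b t| < e by near: t; exact: cvgr_dist_lt _ _ ba _ e0.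
apply: (le_trans (_ : g (f t) <= (b t)%:E)%E); first by near: t; exact: gfb.
by rewrite lee_fin; move: bt; rewrite ltr_norml; lra.
Unshelve. all: by end_near.
Qed.

End LowerSemicontinuity.

Section ConvexLsc.
Variables (R : realType) (H : completeNormedModType R) (g : H -> \bar R).
Hypotheses (g_nNy : forall x, g x != -oo%E) (g_cvx : convex_fun g)
  (g_lsc : lsc_fun g).

Lemma EFin_of_neq_pinfty x : g x != +oo%E -> exists r : R, g x = r%:E.
Proof. by move=> gx; exists (fine (g x)); rewrite fineK // fin_numE g_nNy. Qed.

Lemma fin_num_of_le x (r : R) : (g x <= r%:E)%E -> g x \is a fin_num.
Proof. by move=> gx; rewrite fin_numE g_nNy; apply: contraTneq gx => ->. Qed.

Lemma convex_fun_EFin x y a b t : g x = a%:E -> g y = b%:E -> 0 <= t <= 1 ->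
  (g (t *: x + (1 - t) *: y)%R <= (t * a + (1 - t) * b)%:E)%E.
Proof.
by move=> gx gy t01; have := @g_cvx x y t t01; rewrite gx gy -!EFinM -EFinD.
Qed.

Lemma lsc_convex_cone_minorant x0 g0 : g x0 = g0%:E ->
  exists2 K : R, 0 <= K & forall y, ((g0 - 1 - K * `|y - x0|)%:E <= g y)%E.
Proof.
move=> gx0.
have : open (~` [set x | (g x <= (g0 - 1)%:E)%E]) by rewrite openC; exact: g_lsc.
rewrite openE => /(_ x0); rewrite /= gx0 lee_fin => /(_ ltac:(lra)).
move=> /nbhs_ballP [d /= d0 near_x0].
have g_near x : `|x0 - x| < d -> ((g0 - 1)%:E < g x)%E.
  by move=> x0x; rewrite ltNge; apply/negP; apply: near_x0; rewrite -ball_normE.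
exists (2 / d); first by rewrite divr_ge0 // ltW.
move=> y; have [->|/EFin_of_neq_pinfty [gy gyE]] := eqVneq (g y) +oo%E.
  by rewrite leey.
rewrite gyE lee_fin; set D := `|y - x0|.
have K_ge0 : 0 <= 2 / d * D.
  by apply: mulr_ge0 (normr_ge0 _); apply: divr_ge0 (ltW d0).
have [Dd|dD] := ltP D d.
  by have := g_near y; rewrite distrC gyE lte_fin => /(_ Dd); lra.
pose s := d / (2 * D).
have D0 : 0 < D by exact: lt_le_trans dD.
have s0 : 0 < s by rewrite divr_gt0 // mulr_gt0.
have s1 : s <= 1 by rewrite ler_pdivrMr ?mulr_gt0 //; lra.
have sKD : 2 / d * D * s = 1 by rewrite /s; field; rewrite !gt_eqF.
have x0w : x0 - (s *: y + (1 - s) *: x0) = s *: (x0 - y).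
  by rewrite scalerBl scale1r scalerBr addrCA opprD addrA subrr add0r opprB.
have gw : ((g0 - 1)%:E < g (s *: y + (1 - s) *: x0)%R)%E.
  apply: g_near; rewrite x0w normrZ distrC gtr0_norm // -/D.
  have -> : s * D = d / 2 by rewrite /s; field; rewrite gt_eqF.
  lra.
have := lt_le_trans gw (convex_fun_EFin gyE gx0 _).
rewrite lte_fin (ltW s0) s1 => /(_ isT) lt_s.
have KD0 : 0 < 2 / d * D by rewrite mulr_gt0 ?divr_gt0.
have : 2 / d * D * (-1) < 2 / d * D * (s * (gy - g0)) by rewrite ltr_pM2l //; lra.
by rewrite mulrA sKD; lra.
Qed.

End ConvexLsc.

Lemma le0_of_le_scale (R : realFieldType) (A k : R) :
  (forall t, 0 < t <= 1 -> A <= t * k) -> A <= 0.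
Proof.
move=> A_le; rewrite leNgt; apply/negP => A0.
have k0 : 0 <= k by have := A_le 1; rewrite ltr01 lexx mul1r => /(_ isT); lra.
pose t := A / (k + A).
have t_kA : t * (k + A) = A by rewrite /t divfK // gt_eqF //; lra.
have t0 : 0 < t by rewrite divr_gt0 //; lra.
have t1 : t <= 1 by rewrite ler_pdivrMr; lra.
by have := A_le t; rewrite t0 t1 => /(_ isT); nra.
Qed.

Lemma cvgn_of_sqr_dist_le (R : realType) (V : completeNormedModType R)
    (u : nat -> V) (d : nat -> R) :
  d @ \oo --> 0 -> (forall n k, `|u n - u k| ^+ 2 <= d n + d k) -> cvgn u.
Proof.
move=> d0 u_d; apply: cauchy_cvg; apply: cauchy_exP => e e0.
have e2_gt0 : 0 < e ^+ 2 / 2 by rewrite divr_gt0 ?exprn_gt0.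
have [N _ dN] := cvgr_dist_lt _ _ d0 _ e2_gt0.
exists (u N); exists N => // n /= Nn; rewrite -ball_normE /=.
have := dN N (leqnn N); rewrite /= sub0r normrN => /ltr_normlP[_ dN_lt].
have := dN n Nn; rewrite /= sub0r normrN => /ltr_normlP[_ dn_lt].
by have := u_d N n; have := normr_ge0 (u N - u n); nra.
Qed.

Section Prox.
Variables (R : realType) (H : completeNormedModType R) (ip : H -> H -> R)
  (g : H -> \bar R).
Hypotheses (ipP : is_inner_product ip) (gG : Gamma0 g).

Let g_nNy x : g x != -oo%E. Proof. by case: gG => -[]. Qed.
Let g_cvx : convex_fun g. Proof. by case: gG. Qed.
Let g_lsc : lsc_fun g. Proof. by case: gG. Qed.

Definition prox_objective (c : R) (z y : H) : \bar R :=
  (g y + (c / 2 * `|z - y| ^+ 2)%:E)%E.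

Lemma prox_objective_bounded_below c z : 0 < c ->
  exists B : R, forall y, (B%:E <= prox_objective c z y)%E.
Proof.
move=> c0; have [x0 /fineK gx0] : exists x0, g x0 \is a fin_num by case: gG => -[].
have [K K0 g_ge] := lsc_convex_cone_minorant g_nNy g_cvx g_lsc (esym gx0).
exists (fine (g x0) - 1 - K * `|z - x0| - K ^+ 2 / (2 * c)) => y.
apply: le_trans (leeD (g_ge y) (lexx _)); rewrite -EFinD lee_fin.
have := ler_distD z y x0; rewrite (distrC y z).
(* AM-GM: [K r <= c r^2 / 2 + K^2 / (2 c)] *)
have : 0 <= (c * `|z - y| - K) ^+ 2 / (2 * c).
  by rewrite divr_ge0 ?sqr_ge0 ?mulr_ge0 ?ltW.
have -> : (c * `|z - y| - K) ^+ 2 / (2 * c) =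
    c / 2 * `|z - y| ^+ 2 + K ^+ 2 / (2 * c) - K * `|z - y|.
  by field; rewrite gt_eqF.
nra.
Qed.

Lemma prox_objective_sqr_dist_le c z mu x y a b :
  (forall w, (mu%:E <= prox_objective c z w)%E) -> g x = a%:E -> g y = b%:E ->
  2 * mu + c / 4 * `|x - y| ^+ 2 <=
  a + c / 2 * `|z - x| ^+ 2 + (b + c / 2 * `|z - y| ^+ 2).
Proof.
move=> mu_le gx gy.
have half01 : 0 <= (2^-1 : R) <= 1 by rewrite invr_ge0 invf_le1 ?ler0n ?ler1n.
have := le_trans (mu_le _) (leeD (convex_fun_EFin g_cvx gx gy half01) (lexx _)).
have -> : 1 - 2^-1 = 2^-1 :> R by field.
rewrite -EFinD lee_fin (apollonius ipP).
by move=> h; nra.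
Qed.

Lemma prox_minimizing_seq c z : 0 < c ->
  exists2 mu : R, (forall y, (mu%:E <= prox_objective c z y)%E) &
  exists f : nat -> H, forall n, (prox_objective c z (f n) < (mu + harmonic n)%:E)%E.
Proof.
move=> c0; have [B B_le] := prox_objective_bounded_below z c0.
have [x0 gx0] : exists x0, g x0 \is a fin_num by case: gG => -[].
set mu := ereal_inf (range (prox_objective c z)).
have mu_le y : (mu <= prox_objective c z y)%E by apply: ereal_inf_lbound; exists y.
have mu_fin : mu \is a fin_num.
  rewrite fin_numElt (lt_le_trans (ltNyr B)) /=; last first.
    by apply: le_ereal_inf_tmp => _ [y _ <-]; exact: B_le.
  by rewrite (le_lt_trans (mu_le x0)) // /prox_objective -(fineK gx0) -EFinD ltry.
exists (fine mu) => [y|]; first by rewrite fineK.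
suff /choice[f f_lt] : forall n, exists y,
    (prox_objective c z y < (fine mu + harmonic n)%:E)%E by exists f.
move=> n.
have [_ [y _ <-]] := lb_ereal_inf_adherent (harmonic_gt0 n) mu_fin.
by rewrite EFinD fineK //; exists y.
Qed.

Lemma prox_exists c z : 0 < c -> exists p, g p \is a fin_num /\
  forall y, (prox_objective c z p <= prox_objective c z y)%E.
Proof.
move=> c0; have [mu mu_le [f f_lt]] := prox_minimizing_seq z c0.
have gf_le n : (g (f n) <= (mu + harmonic n - c / 2 * `|z - f n| ^+ 2)%:E)%E.
  by rewrite EFinB leeBrDr //; apply: ltW; exact: f_lt.
pose a n := fine (g (f n)).
have gfE n : g (f n) = (a n)%:E by rewrite fineK // (fin_num_of_le g_nNy (gf_le n)).
have a_le n : a n <= mu + harmonic n - c / 2 * `|z - f n| ^+ 2.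
  by rewrite -lee_fin -gfE.
have cvg_f : cvgn f.
  apply: (@cvgn_of_sqr_dist_le _ _ _ (fun n => 4 / c * harmonic n)) => [|n k].
    by rewrite -(mulr0 (4 / c)); apply: cvgMr; exact: cvg_harmonic.
  have := prox_objective_sqr_dist_le mu_le (gfE n) (gfE k).
  have := a_le n; have := a_le k => ak an mid.
  have : c / 4 * `|f n - f k| ^+ 2 <= harmonic n + harmonic k by lra.
  move/(ler_wpM2l (_ : 0 <= 4 / c)); rewrite mulrA mulrDr.
  have -> : 4 / c * (c / 4) = 1 by field; rewrite gt_eqF.
  by rewrite mul1r; apply; rewrite divr_ge0 // ltW.
set p := lim (f @ \oo).
have sqr_dist_cvg : (fun n => `|z - f n| ^+ 2) @ \oo --> `|z - p| ^+ 2.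
  apply: (continuous_cvg _ (@exprn_continuous _ 2 _)).
  by apply: cvg_norm; apply: cvgB; [exact: cvg_cst | exact: cvg_f].
have gp_le : (g p <= (mu - c / 2 * `|z - p| ^+ 2)%:E)%E.
  apply: (lsc_cvg_le g_lsc cvg_f _ (nearW _ gf_le)).
  apply: cvgB; last exact: cvgMr sqr_dist_cvg.
  by rewrite -[X in _ --> X]addr0; apply: cvgD; [exact: cvg_cst | exact: cvg_harmonic].
exists p; split; first by have := fin_num_of_le g_nNy gp_le.
move=> y; apply: (le_trans _ (mu_le y)).
by rewrite /prox_objective -leeBrDr // -EFinB.
Qed.

Definition subgradient (p u : H) : Prop :=
  forall y, (g p + (ip u (y - p))%:E <= g y)%E.

Lemma prox_subgradient c z p : 0 < c -> g p \is a fin_num ->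
  (forall y, (prox_objective c z p <= prox_objective c z y)%E) ->
  subgradient p (c *: (z - p)).
Proof.
move=> c0 gp_fin p_min y.
have gpE : g p = (fine (g p))%:E by rewrite fineK.
set a := fine (g p) in gpE.
have [->|/(EFin_of_neq_pinfty g_nNy) [b gyE]] := eqVneq (g y) +oo%E.
  by rewrite leey.
rewrite gpE gyE -EFinD lee_fin (ipZl ipP) -subr_le0.
apply: (le0_of_le_scale (k := c / 2 * `|y - p| ^+ 2)) => t /andP[t0 t1].
have := p_min (t *: y + (1 - t) *: p); rewrite /prox_objective.
have -> : z - (t *: y + (1 - t) *: p) = 1 *: (z - p) + (- t) *: (y - p).
  by rewrite scale1r scaleNr scalerBr scalerBl scale1r -addrA -opprD addrCA.
rewrite (sqr_normDZ ipP) gpE.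
move/le_trans/(_ (leeD (convex_fun_EFin g_cvx gyE gpE _) (lexx _))).
rewrite (ltW t0) t1 -!EFinD lee_fin => /(_ isT) le_t.
have : t * (a + c * ip (z - p) (y - p) - b) <=
    t * (t * (c / 2 * `|y - p| ^+ 2)) by lra.
by rewrite ler_pM2l.
Qed.

Lemma conjugate_subgradient p u : g p \is a fin_num -> subgradient p u ->
  conjugate ip g u = ((ip u p)%:E - g p)%E.
Proof.
move=> gp_fin u_sub; apply/le_anti/andP; split; last first.
  by apply: ereal_sup_ubound; exists p.
apply: ge_ereal_sup => _ [y _ <-].
have [->|/(EFin_of_neq_pinfty g_nNy) [b gyE]] := eqVneq (g y) +oo%E.
  by rewrite addeNy leNye.
have := u_sub y; rewrite -(fineK gp_fin) gyE -!EFinD !lee_fin (ipBr ipP).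
by lra.
Qed.

Section ProxNormBound.
Variables (l m : R).
Hypotheses (l_ge0 : 0 <= l) (conj_ge : forall xs, (m%:E <= conjugate ip g xs)%E)
  (prox_norm_ge : forall x p, is_prox g x p -> `|x| - l <= `|p|).

Lemma subgradient_growth p u s : g p \is a fin_num -> subgradient p u ->
  0 <= s -> l <= `|u| -> s * (`|u| * (`|u| - l)) <= ip u p - fine (g p) - m.
Proof.
move=> gp_fin u_sub s0 lu.
have [q [gq_fin q_min]] := prox_exists ((s + 1) *: u) ltr01.
have q_prox : is_prox g ((s + 1) *: u) q.
  by move=> y; have := q_min y; rewrite /prox_objective mul1r.
have := prox_norm_ge q_prox; rewrite normrZ ger0_norm; last lra.
move=> q_ge.
set v := (s + 1) *: u - q.
have v_sub : subgradient q v.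
  by have := prox_subgradient ltr01 gq_fin q_min; rewrite scale1r.
have := conj_ge v; rewrite (conjugate_subgradient gq_fin v_sub).
have := u_sub q; rewrite -(fineK gq_fin) -(fineK gp_fin) -EFinD -EFinB !lee_fin.
have -> : ip v q = (s + 1) * ip u q - `|q| ^+ 2.
  by rewrite /v (ipC ipP) (ipBr ipP) (ipZr ipP) -(sqr_norm_ip ipP) (ipC ipP q).
rewrite (ipBr ipP) => u_q v_q.
have := ip_le_normM ipP u q; have := normr_ge0 q; rewrite /=; nra.
Qed.

Lemma subgradient_norm_le p u : g p \is a fin_num -> subgradient p u -> `|u| <= l.
Proof.
move=> gp_fin u_sub; rewrite leNgt; apply/negP => lu.
set C := ip u p - fine (g p) - m.
have k_gt0 : 0 < `|u| * (`|u| - l).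
  by rewrite mulr_gt0 ?subr_gt0 // (le_lt_trans l_ge0 lu).
have s_ge0 : 0 <= (`|C| + 1) / (`|u| * (`|u| - l)).
  by rewrite divr_ge0 ?ltW // addr_ge0.
have := subgradient_growth gp_fin u_sub s_ge0 (ltW lu).
by rewrite divfK ?gt_eqF // -/C; have := ler_norm C; lra.
Qed.

Lemma upper_lipschitz_bound x y :
  g x \is a fin_num -> (g y <= g x + (l * `|y - x|)%:E)%E.
Proof.
move=> gx_fin.
have c_gt0 n : 0 < (harmonic n)^-1 :> R by rewrite invr_gt0 harmonic_gt0.
have /choice[p pP] n : exists p, g p \is a fin_num /\ forall w,
    (prox_objective (harmonic n)^-1 y p <= prox_objective (harmonic n)^-1 y w)%E.
  exact: prox_exists.
have p_sub n : subgradient (p n) ((harmonic n)^-1 *: (y - p n)).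
  by have [gp_fin p_min] := pP n; exact: prox_subgradient.
have p_near n : `|y - p n| <= l * harmonic n.
  have := subgradient_norm_le (pP n).1 (p_sub n).
  by rewrite normrZ gtr0_norm // ler_pdivrMl ?harmonic_gt0 // mulrC.
have p_cvg : p @ \oo --> y.
  have lh : (fun n => l * harmonic n) @ \oo --> 0.
    by rewrite -(mulr0 l); apply: cvgMr; exact: cvg_harmonic.
  apply/cvgrPdist_lt => e e0; near=> n.
  have : `|0 - l * harmonic n| < e by near: n; exact: cvgr_dist_lt _ _ lh _ e0.
  rewrite sub0r normrN ger0_norm ?mulr_ge0 ?harmonic_ge0 //.
  exact: le_lt_trans (p_near n).
have gp_le n : (g (p n) <= (fine (g x) + l * `|p n - x|)%:E)%E.
  have := p_sub n x; have := subgradient_norm_le (pP n).1 (p_sub n).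
  set u := (harmonic n)^-1 *: (y - p n).
  have := ip_le_normM ipP (- u) (x - p n).
  rewrite (ipNl ipP) normrN -(fineK (pP n).1) -(fineK gx_fin) -EFinD !lee_fin distrC.
  by move=> cs ul /=; have := normr_ge0 (p n - x); nra.
have b_cvg : (fun n => fine (g x) + l * `|p n - x|) @ \oo -->
    fine (g x) + l * `|y - x|.
  apply: cvgD; first exact: cvg_cst.
  by apply: cvgMr; apply: cvg_norm; apply: cvgB; [exact: p_cvg | exact: cvg_cst].
rewrite -(fineK gx_fin) -EFinD.
exact: (lsc_cvg_le g_lsc p_cvg b_cvg (nearW _ gp_le)).
Unshelve. all: by end_near.
Qed.

End ProxNormBound.

End Prox.

Theorem proposition3 (R : realType) (H : completeNormedModType R)
  (ip : H -> H -> R) (hip : is_inner_product ip)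
  (l : R) (hl : 0 <= l) (g : H -> \bar R) (hg : Gamma0 g)
  (hconj : exists m : R, forall xs : H, (m%:E <= conjugate ip g xs)%E)
  (hprox : forall x p : H, is_prox g x p -> `|x| - l <= `|p|) :
  (g (0 : H)%R \is a fin_num /\ forall x : H, (g x <= g (0 : H)%R + (l * `|x|)%:E)%E) /\
  (l = 0 -> forall x y : H, g x = g y).
Proof.
have [[g_nNy [x0 gx0_fin]] _ _] := hg.
have [m conj_ge] := hconj.
have lip := upper_lipschitz_bound hip hg hl conj_ge hprox.
have g0_fin : g 0 \is a fin_num.
  apply: (fin_num_of_le g_nNy (r := fine (g x0) + l * `|0 - x0|)).
  by rewrite EFinD fineK // lip.
have g_le x : (g x <= g (0 : H)%R + (l * `|x|)%:E)%E.
  by rewrite -[x in `|x|]subr0 lip.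
split=> // l0 x y.
have g_fin z : g z \is a fin_num.
  by apply: (fin_num_of_le g_nNy (r := fine (g 0) + l * `|z|)); rewrite EFinD fineK.
apply/le_anti/andP; split; [have := lip y x (g_fin y) | have := lip x y (g_fin x)].
  by rewrite l0 mul0r adde0.
by rewrite l0 mul0r adde0.
Qed.
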